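(* For every integer $n\ge2$, $$\mathfrak{C}_n(x)=2x^2\,\mathfrak{C}_{n-2}(x)+\left(\frac x4+4x^3\right)\mathfrak{C}'_{n-2}(x)+\left(\frac{x^2}4+x^4\right)\mathfrak{C}''_{n-2}(x),$$ where primes denote derivatives with respect to $x$.
   Context: For $n\ge1$ the central factorial is $x^{[n]}=x\,(x+\tfrac n2-1)(x+\tfrac n2-2)\cdots(x-\tfrac n2+1)$ (a product of $n$ factors), and $x^{[0]}=1$. The central factorial numbers of the second kind $T(n,k)$ ($0\le k\le n$) are defined by $x^n=\sum_{k=0}^n T(n,k)\,x^{[k]}$; equivalently $T(n,k)=\frac1{k!}\sum_{j=0}^k(-1)^j\binom kj\left(\frac k2-j\right)^n$, and $T(n,k)=0$ for $k>n$. The $n$th central Fubini-like polynomial is $\mathfrak{C}_n(x)=\sum_{k=0}^n k!\,T(n,k)\,x^k$. *)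

From HB Require Import structures.
From mathcomp Require Import all_boot all_order all_algebra.
Set Implicit Arguments. Unset Strict Implicit. Unset Printing Implicit Defensive.
Import Order.TTheory GRing.Theory Num.Theory.
Local Open Scope ring_scope.

(* Central factorial numbers of the second kind, via the explicit formula
   T(n,k) = 1/k! * sum_{j=0}^k (-1)^j C(k,j) (k/2 - j)^n, as rationals. *)
Definition cfT (n k : nat) : rat :=
  (k`!%:R)^-1 * \sum_(j < k.+1)
     (-1) ^+ j * ('C(k, j))%:R * ((k%:R / 2%:R) - j%:R) ^+ n.

Definition cfub (n : nat) : {poly rat} :=
  \sum_(k < n.+1) ((k`!%:R * cfT n k) *: 'X^k).

(* The coefficient of x^k in C_n is the central difference
   d(n, k) = sum_j (-1)^j C(k, j) (k/2 - j)^n of x^n at 0, i.e. k! T(n, k).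
   Writing (k/2 - j)^2 = k^2/4 - j (k - j) and absorbing the factor j (k - j)
   into the binomial coefficient gives d(n+2, k) = k^2/4 d(n, k)
   + k (k-1) d(n, k-2), the central-factorial analogue of the Stirling
   recurrence.  Comparing the coefficients of x^k on both sides of the claimed
   identity yields exactly this recurrence. *)
From HB Require Import structures.
From mathcomp Require Import all_boot all_order all_algebra.
From mathcomp Require Import ring.
Import GRing.Theory Num.Theory.
Local Open Scope ring_scope.

Section AlternatingBinomialSums.

Variable R : comPzRingType.

Lemma sum_alt_binomial k : (0 < k)%N ->
  \sum_(j < k.+1) (-1) ^+ j * ('C(k, j))%:R = 0 :> R.
Proof.
move=> k_gt0; have := exprBn (1 : R) 1 k.
rewrite subrr expr0n eqn0Ngt k_gt0 /= => expand; rewrite [RHS]expand.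
by apply: eq_bigr => j _; rewrite !expr1n !mulr1 mulr_natr.
Qed.

Lemma sum_alt_binomial_mul_index k (F : nat -> R) :
  \sum_(j < k.+2) (-1) ^+ j * ('C(k.+1, j))%:R * j%:R * F j
  = - (k.+1)%:R * \sum_(i < k.+1) (-1) ^+ i * ('C(k, i))%:R * F i.+1.
Proof.
rewrite big_ord_recl /= mulr0 mul0r add0r mulr_sumr.
apply: eq_bigr => i _; rewrite /bump /= add1n.
have absorb : ('C(k.+1, i.+1))%:R * (i.+1)%:R = (k.+1)%:R * ('C(k, i))%:R :> R.
  by rewrite -!natrM mulnC -mul_bin_diag.
transitivity ((-1) ^+ i.+1 * (('C(k.+1, i.+1))%:R * (i.+1)%:R) * F i.+1).
  by ring.
by rewrite absorb exprS; ring.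
Qed.

Lemma sum_alt_binomial_mul_compl k (F : nat -> R) :
  \sum_(i < k.+2) (-1) ^+ i * ('C(k.+1, i))%:R * ((k.+1)%:R - i%:R) * F i
  = (k.+1)%:R * \sum_(i < k.+1) (-1) ^+ i * ('C(k, i))%:R * F i.
Proof.
rewrite big_ord_recr /= subrr mulr0 mul0r addr0 mulr_sumr.
apply: eq_bigr => i _.
have absorb : ('C(k.+1, i))%:R * ((k.+1)%:R - i%:R) = (k.+1)%:R * ('C(k, i))%:R :> R.
  by rewrite -natrB ?(ltnW (ltn_ord i)) // -!natrM mulnC -mul_bin_down.
transitivity ((-1) ^+ i * (('C(k.+1, i))%:R * ((k.+1)%:R - i%:R)) * F i).
  by ring.
by rewrite absorb; ring.
Qed.

End AlternatingBinomialSums.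

Definition central_diff (n k : nat) : rat :=
  \sum_(j < k.+1) (-1) ^+ j * ('C(k, j))%:R * ((k%:R / 2%:R) - j%:R) ^+ n.

Lemma central_diff0 k : (0 < k)%N -> central_diff 0 k = 0.
Proof.
move=> k_gt0; rewrite /central_diff -[RHS](sum_alt_binomial rat _ k_gt0).
by apply: eq_bigr => j _; rewrite expr0 mulr1.
Qed.

Lemma central_diff1 k : (1 < k)%N -> central_diff 1 k = 0.
Proof.
case: k => [|[|k]] // _.
transitivity ((k.+2)%:R / 2%:R * \sum_(j < k.+3) (-1) ^+ j * ('C(k.+2, j))%:R
   - \sum_(j < k.+3) (-1) ^+ j * ('C(k.+2, j))%:R * j%:R * (fun=> 1 : rat) j).
  by rewrite mulr_sumr -sumrB; apply: eq_bigr => j _; ring.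
rewrite (sum_alt_binomial_mul_index _ k.+1 (fun=> 1)) sum_alt_binomial //.
under eq_bigr do rewrite mulr1.
by rewrite sum_alt_binomial // !mulr0 subrr.
Qed.

Lemma central_diffSS m k : central_diff m.+2 k =
  k%:R ^+ 2 / 4%:R * central_diff m k
  + (if k is k'.+2 then k%:R * (k%:R - 1) * central_diff m k' else 0).
Proof.
have split_square : central_diff m.+2 k = k%:R ^+ 2 / 4%:R * central_diff m k
   - \sum_(j < k.+1) (-1) ^+ j * ('C(k, j))%:R * j%:R
        * ((k%:R - j%:R) * (k%:R / 2%:R - j%:R) ^+ m).
  rewrite /central_diff mulr_sumr -sumrB; apply: eq_bigr => j _.
  by rewrite !exprS; field.
rewrite {}split_square; case: k => [|[|k]].
- by rewrite big_ord1 /= !mulr0 !mul0r; ring.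
- by rewrite !big_ord_recl big_ord0 /= /bump /=; ring.
rewrite (sum_alt_binomial_mul_index _ k.+1
  (fun j => ((k.+2)%:R - j%:R) * ((k.+2)%:R / 2%:R - j%:R) ^+ m)) mulNr opprK.
congr (_ + _).
have shift_compl i : (k.+2)%:R - (i.+1)%:R = (k.+1)%:R - i%:R :> rat by ring.
have shift_center i : (k.+2)%:R / 2%:R - (i.+1)%:R = k%:R / 2%:R - i%:R :> rat.
  by field.
under eq_bigr => i _ do rewrite shift_compl shift_center mulrA.
rewrite (sum_alt_binomial_mul_compl _ k (fun i => (k%:R / 2%:R - i%:R) ^+ m)).
by rewrite /central_diff; ring.
Qed.

Lemma central_diff_eq0 n k : (n < k)%N -> central_diff n k = 0.
Proof.
elim/ltn_ind: n k => -[|[|m]] IH k lt_nk.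
- exact: central_diff0.
- exact: central_diff1.
have lt_m_m2 : (m < m.+2)%N := leqnSn m.+1.
rewrite central_diffSS IH ?mulr0 ?add0r //; last exact: ltn_trans lt_m_m2 lt_nk.
by case: k lt_nk => [|[|k]] // lt_mk; rewrite IH ?mulr0.
Qed.

Lemma coef_cfub n k : (cfub n)`_k = central_diff n k.
Proof.
rewrite /cfub -(poly_def _ (fun k => k`!%:R * cfT n k)) coef_poly.
case: ltnP => [_|lt_nk]; last by rewrite central_diff_eq0.
by rewrite /cfT mulrA mulfV ?mul1r // pnatr_eq0 -lt0n fact_gt0.
Qed.

Theorem theorem6 (n : nat) (hn : (2 <= n)%N) :
  cfub n =
    (2%:R *: 'X^2) * cfub (n - 2)
    + ((1 / 4%:R) *: 'X + 4%:R *: 'X^3) * (cfub (n - 2))^`()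
    + ((1 / 4%:R) *: 'X^2 + 'X^4) * (cfub (n - 2))^`(2).
Proof.
have [m ->] : exists m, n = m.+2 by exists (n - 2)%N; rewrite -addn2 subnK.
rewrite !subSS subn0; apply/polyP => k.
rewrite !mulrDl -!scalerAl !coefD !coefZ coefXM !coefXnM.
rewrite !coef_derivn !coef_deriv !coef_cfub central_diffSS.
have ffact2 j : (j.+2 ^_ 2 = j.+2 * j.+1)%N by rewrite !ffactnS ffactn0 muln1.
by case: k => [|[|[|[|k]]]] /=; rewrite ?subSS ?subn0 ?subnn ?add2n ?addn0 ?ffact2; field.
Qed.
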